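(* Let $E$ be a finite Galois extension of $\mathbb{Q}$ with Galois group $G$, with a fixed embedding $E\hookrightarrow\mathbb{C}$, and let $V$ be a finite-dimensional $E$-vector space. Let $W_\mathbb{Q}\subseteq V_\mathbb{Q}$ be any $\mathbb{Q}$-subspace of the underlying $\mathbb{Q}$-vector space of $V$, and let $W_\mathbb{C}=W_\mathbb{Q}\otimes_\mathbb{Q}\mathbb{C}\subseteq V_\mathbb{C}$. (i) If there exists $\sigma_0\in G$ with $P_{\sigma_0}(W_\mathbb{C})=V_{\sigma_0}$, then $P_\sigma(W_\mathbb{C})=V_\sigma$ for all $\sigma\in G$. (ii) If there exist $\sigma_0\neq\tau_0$ in $G$ with $P_{\sigma_0,\tau_0}(W_\mathbb{C})=V_{\sigma_0}\oplus V_{\tau_0}$, then $P_{\sigma,\tau}(W_\mathbb{C})=V_\sigma\oplus V_\tau$ for every pair $(\sigma,\tau)=(\kappa\sigma_0,\kappa\tau_0)$ with $\kappa\in G$.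
   Context: $V_\mathbb{C}=V\otimes_\mathbb{Q}\mathbb{C}$, on which $E$ acts via the first factor, making it a module over $E\otimes_\mathbb{Q}\mathbb{C}$. Identifying each $\sigma\in G$ with the embedding $E\xrightarrow{\sigma}E\subset\mathbb{C}$, one has $V_\mathbb{C}=\bigoplus_{\sigma\in G}V_\sigma$ where $V_\sigma=\{w\in V_\mathbb{C}: (e\otimes1)w=\sigma(e)w \text{ for all } e\in E\}$. $P_\sigma:V_\mathbb{C}\to V_\sigma$ is the $\mathbb{C}$-linear projection onto the summand $V_\sigma$, and for $\sigma\neq\tau$, $P_{\sigma,\tau}=P_\sigma\oplus P_\tau:V_\mathbb{C}\to V_\sigma\oplus V_\tau$. *)

From HB Require Import structures.
From mathcomp Require Import all_boot all_order all_algebra all_fingroup all_field.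
From mathcomp Require Import complex.
From mathcomp Require Import reals.
Set Implicit Arguments. Unset Strict Implicit. Unset Printing Implicit Defensive.
Import GRing.Theory Num.Theory.
Local Open Scope ring_scope.

(* Setting.
   - E is modelled by L : splittingFieldType rat (finite extension of Q),
     assumed Galois over Q; G = 'Gal({:L} / 1).
   - C is modelled by R[i] for R : realType (the complex numbers).
   - iota : {rmorphism L -> R[i]} is the fixed embedding E -> C.
   - V: a finite-dimensional E-vector space is a finite-dimensional Q-vector
     space V_Q (= 'rV[rat]_m after choosing a Q-basis) together with a
     Q-algebra action rho : E -> End_Q(V_Q) (row vectors, v |-> v *m rho e).
   - V_C = V_Q (x)_Q C = 'rV[R[i]]_m, with E acting via the first factor,
     i.e. by the matrix rho e with entries mapped into C.
   - A Q-subspace W_Q of V_Q is the row space of a rational matrix; W_C is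
     the row space of the same matrix read in C. *)

Section Setup.
Variables (R : realType) (L : splittingFieldType rat) (m : nat).
Variable (iota : {rmorphism L -> R[i]}) (rho : L -> 'M[rat]_m).

Definition Emodule_action : Prop :=
  [/\ rho 1 = 1%:M,
      forall a b, rho (a + b) = rho a + rho b,
      forall a b, rho (a * b) = rho a *m rho b
    & forall (c : rat) a, rho (c *: a) = c *: rho a].

Definition rhoC (e : L) : 'M[R[i]]_m := map_mx (fun q : rat => ratr q) (rho e).

(* V_sigma = { w in V_C : (e (x) 1) w = sigma(e) w for all e in E },
   where sigma is identified with the embedding iota o sigma.  Since the
   condition is Q-linear in e, it is imposed on a Q-basis of E. *)
Definition Vsig (s : gal_of {:L}) : 'M[R[i]]_m :=
  (\bigcap_(i < \dim {:L})
     eigenspace (rhoC (vbasis {:L})`_i) (iota (s (vbasis {:L})`_i)))%MS.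

Definition Psig (s : gal_of {:L}) : 'M[R[i]]_m :=
  proj_mx (Vsig s) (\sum_(t in 'Gal({:L} / 1%VS)%g | t != s) Vsig t)%MS.

Definition Psig2 (s t : gal_of {:L}) : 'M[R[i]]_m :=
  proj_mx (Vsig s + Vsig t)%MS
          (\sum_(u in 'Gal({:L} / 1%VS)%g | (u != s) && (u != t)) Vsig u)%MS.

End Setup.

(* composition kappa o sigma (apply sigma first).  Note MathComp's
   Galois group product satisfies (x * y) a = y (x a). *)
Definition galcomp (L : splittingFieldType rat) (k s : gal_of {:L}) : gal_of {:L} :=
  (s * k)%g.

Definition toC (R : realType) (k m : nat) (W : 'M[rat]_(k, m)) : 'M[R[i]]_(k, m) :=
  map_mx (fun q : rat => ratr q) W.

From HB Require Import structures.
From mathcomp Require Import all_boot all_order all_algebra all_fingroup all_field.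
From mathcomp Require Import complex reals.
From mathcomp Require Import zify.
Set Implicit Arguments. Unset Strict Implicit. Unset Printing Implicit Defensive.
Import GRing.Theory Num.Theory.
Local Open Scope ring_scope.

(* For A a set of Galois elements and V_A the sum of the V_s with s in A,
   V_C is the direct sum of V_A and V_(G \ A), so P_A(W_C) = V_A amounts to
   V_A <= W_C + V_(G \ A).  Each V_s is an eigenspace of the primitive
   element of E, hence is the extension of scalars of a subspace defined
   over E, and W is defined over Q; so this inclusion can be tested over E,
   and mapping the matrices by kappa in G carries V_s to V_(s kappa) while
   fixing W.  The condition for A is therefore equivalent to the one for
   A kappa. *)

Section ProjectionImage.
Variables (F : fieldType) (n : nat).
Implicit Types U V : 'M[F]_n.

Lemma proj_mx_img_eqE k (X : 'M[F]_(k, n)) U V :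
  (U :&: V = 0)%MS -> (1%:M <= U + V)%MS ->
  (X *m proj_mx U V == U)%MS = (U <= X + V)%MS.
Proof.
move=> dxUV fullUV; rewrite proj_mx_sub /=.
apply/idP/idP => [sUXP | /sub_addsmxP[[A B] /= defU]].
  apply: submx_trans sUXP _.
  rewrite -[X *m _](subrK X) addrC -opprB addmx_sub_adds ?submx_refl //.
  by rewrite eqmx_opp proj_mx_compl_sub // (submx_trans (submx1 X) fullUV).
rewrite -[X in (X <= _)%MS](proj_mx_id dxUV (submx_refl U)) {1}defU.
by rewrite mulmxDl -!mulmxA (proj_mx_0 dxUV (submx_refl V)) mulmx0 addr0 submxMl.
Qed.

Lemma mxdirect_sum_split (I : finType) (P Q : pred I) (A : I -> 'M[F]_n) :
  mxdirect (\sum_(i | P i) A i) ->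
  ((\sum_(i | P i && Q i) A i) :&: (\sum_(i | P i && ~~ Q i) A i) = 0)%MS.
Proof.
set X := (\sum_(i | P i && Q i) A i)%MS; set Y := (\sum_(i | P i && ~~ Q i) A i)%MS.
have leX : (\rank X <= \sum_(i | P i && Q i) \rank (A i))%N.
  exact: (mxrank_sum_leqif _).1.
have leY : (\rank Y <= \sum_(i | P i && ~~ Q i) \rank (A i))%N.
  exact: (mxrank_sum_leqif _).1.
move=> /mxdirectP /=; rewrite (bigID Q) /= -/X -/Y (bigID Q) /= => dxA.
apply/eqP; rewrite -mxrank_eq0; have := mxrank_sum_cap X Y; lia.
Qed.

End ProjectionImage.

Lemma map_bigcapmx (F1 F2 : fieldType) (f : {rmorphism F1 -> F2}) n (I : Type)
    (r : seq I) (P : pred I) (A : I -> 'M[F1]_n) :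
  (map_mx f (\bigcap_(i <- r | P i) A i) :=: \bigcap_(i <- r | P i) map_mx f (A i))%MS.
Proof.
elim/big_rec2: _ => [|i X Y _ eXY]; first by rewrite map_scalar_mx rmorph1.
exact: eqmx_trans (map_capmx _ _ _) (cap_eqmx (eqmx_refl _) eXY).
Qed.

Lemma map_sumsmx (F1 F2 : fieldType) (f : {rmorphism F1 -> F2}) n (I : Type)
    (r : seq I) (P : pred I) (A : I -> 'M[F1]_n) :
  (map_mx f (\sum_(i <- r | P i) A i)%MS :=: \sum_(i <- r | P i) map_mx f (A i))%MS.
Proof.
elim/big_rec2: _ => [|i X Y _ eXY]; first by rewrite map_mx0.
exact: eqmx_trans (map_addsmx f (A i) Y) (adds_eqmx (eqmx_refl _) eXY).
Qed.

Section RhoIn.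
Variables (L : splittingFieldType rat) (m : nat) (rho : L -> 'M[rat]_m).

Definition rho_in (K : fieldType) (e : L) : 'M[K]_m :=
  map_mx (fun q : rat => ratr q) (rho e).

Lemma rho_in_map (K : fieldType) (f : {rmorphism L -> K}) e :
  map_mx f (rho_in L e) = rho_in K e.
Proof. by rewrite -map_mx_comp; apply: eq_map_mx => q /=; apply: fmorph_rat. Qed.

Hypothesis rhoA : Emodule_action rho.
Local Notation r := (rho_in L).

Lemma rho_inE e : r e = map_mx (in_alg L) (rho e).
Proof. by apply: eq_map_mx => q; rewrite fmorph_eq_rat. Qed.

Lemma rho_in1 : r 1 = 1%:M.
Proof. by case: rhoA => h1 _ _ _; rewrite rho_inE h1 map_scalar_mx rmorph1. Qed.

Lemma rho_inD a b : r (a + b) = r a + r b.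
Proof. by case: rhoA => _ hD _ _; rewrite !rho_inE hD map_mxD. Qed.

Lemma rho_inM a b : r (a * b) = r a *m r b.
Proof. by case: rhoA => _ _ hM _; rewrite !rho_inE hM map_mxM. Qed.

Lemma rho_inZ (c : rat) a : r (c *: a) = c%:A *: r a.
Proof. by case: rhoA => _ _ _ hZ; rewrite !rho_inE hZ map_mxZ. Qed.

Lemma rho_in0 : r 0 = 0.
Proof. by apply/eqP; rewrite -(subrr (r 0)) -{2}[0]add0r rho_inD addrK. Qed.

Lemma rho_in_sum (I : Type) (rs : seq I) (P : pred I) (F : I -> L) :
  r (\sum_(i <- rs | P i) F i) = \sum_(i <- rs | P i) r (F i).
Proof. exact: (big_morph r rho_inD rho_in0). Qed.

Lemma rho_in_horner k (W : 'M[L]_(k, m)) x a (p : {poly rat}) :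
  W *m r x = a *: W ->
  W *m r ((map_poly (in_alg L) p).[x]) = (map_poly (in_alg L) p).[a] *: W.
Proof.
move=> eigW; elim/poly_ind: p => [|p c IHp].
  by rewrite map_poly0 !horner0 rho_in0 mulmx0 scale0r.
rewrite rmorphD rmorphM /= map_polyX map_polyC /= !hornerMXaddC.
rewrite rho_inD rho_inM mulmxDr mulmxA IHp -scalemxAl eigW scalerA scalerDl.
by rewrite rho_inZ rho_in1 -scalemxAr mulmx1.
Qed.

End RhoIn.

Section RhoInHorner.
Variables (L : splittingFieldType rat) (n : nat) (rho : L -> 'M[rat]_n.+1).
Hypothesis rhoA : Emodule_action rho.

Lemma horner_mx_rho_in (p : {poly rat}) x :
  horner_mx (rho_in rho L x) (map_poly (in_alg L) p) =
  rho_in rho L ((map_poly (in_alg L) p).[x]).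
Proof.
elim/poly_ind: p => [|p c IHp]; first by rewrite map_poly0 rmorph0 horner0 rho_in0.
rewrite rmorphD rmorphM /= map_polyX map_polyC /= hornerMXaddC.
rewrite rho_inD // rho_inM // rmorphD rmorphM /= IHp horner_mx_X horner_mx_C mulmxE.
by rewrite rho_inZ // rho_in1 // scalemx1.
Qed.

End RhoInHorner.

Lemma kermxpoly_rho_in_root (L : splittingFieldType rat) m (rho : L -> 'M[rat]_m)
    (p : {poly rat}) x :
  Emodule_action rho -> root (map_poly (in_alg L) p) x ->
  (kermxpoly (rho_in rho L x) (map_poly (in_alg L) p) :=: 1%:M)%MS.
Proof.
case: m rho => [|n] rho rhoA /rootP px0.
  by rewrite [kermxpoly _ _]thinmx0 [1%:M]thinmx0.
by rewrite /kermxpoly horner_mx_rho_in // px0 rho_in0 //; apply: kermx0.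
Qed.

Section GaloisGenerator.
Variable L : splittingFieldType rat.
Hypothesis galL : galois 1%VS {:L}.
Local Notation al := (separable_generator 1%VS {:L}).

Lemma mem_generator e : e \in <<1; al>>%VS.
Proof.
case/and3P: galL => sub1L sepL _.
by rewrite -eq_adjoin_separable_generator ?memvf.
Qed.

Lemma gal_horner (s : gal_of {:L}) (p : {poly rat}) x :
  s ((map_poly (in_alg L) p).[x]) = (map_poly (in_alg L) p).[s x].
Proof.
rewrite -horner_map -map_poly_comp; congr (_.[_]).
by apply: eq_map_poly => c /=; rewrite linearZ /= rmorph1.
Qed.

Lemma gal_generator_inj (s t : gal_of {:L}) : s al = t al -> s = t.
Proof.
move=> st; apply/eqP/gal_eqP => e _; have /Fadjoin1_polyP[p ->] := mem_generator e.
by rewrite !gal_horner st.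
Qed.

End GaloisGenerator.

Section EmbeddingEigenspaces.
Variables (L : splittingFieldType rat) (m : nat) (rho : L -> 'M[rat]_m).
Local Notation G := 'Gal({:L} / 1%VS)%g.

(* V_(f o s), i.e. [Vsig] for an arbitrary embedding f of L; [Vsig iota rho s]
   is [Vemb rho iota s], and [Vemb rho id s] is its counterpart over L. *)
Definition Vemb {K : fieldType} (f : L -> K) (s : gal_of {:L}) : 'M[K]_m :=
  (\bigcap_(i < \dim {:L})
     eigenspace (rho_in rho K (vbasis {:L})`_i) (f (s (vbasis {:L})`_i)))%MS.

Definition Vsum {K : fieldType} (f : L -> K) (P : pred (gal_of {:L})) : 'M[K]_m :=
  (\sum_(s in G | P s) Vemb f s)%MS.

Lemma Vemb_map (K : fieldType) (f : {rmorphism L -> K}) s :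
  (map_mx f (Vemb id s) :=: Vemb f s)%MS.
Proof.
apply: eqmx_trans (map_bigcapmx f _ _ _) _.
by under eq_bigr => i _ do rewrite map_eigenspace (rho_in_map rho).
Qed.

Lemma Vsum_map (K : fieldType) (f : {rmorphism L -> K}) P :
  (map_mx f (Vsum id P) :=: Vsum f P)%MS.
Proof.
apply: eqmx_trans (map_sumsmx f _ _ _) _.
by apply: eqmx_sums => s _; apply: Vemb_map.
Qed.

Lemma eq_Vsum (K : fieldType) (f : L -> K) P Q : P =1 Q -> Vsum f P = Vsum f Q.
Proof. by move=> eqPQ; apply: eq_bigl => s; rewrite /= eqPQ. Qed.

Lemma Vsum_pred1 (K : fieldType) (f : L -> K) s :
  s \in G -> Vsum f (pred1 s) = Vemb f s.
Proof.
move=> Gs; apply: big_pred1 => t /=.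
by case: (eqVneq t s) => [->|]; rewrite ?Gs ?andbF.
Qed.

Lemma Vsum_pred2 (K : fieldType) (f : L -> K) s t :
  s \in G -> t \in G -> s != t ->
  Vsum f [pred u | (u == s) || (u == t)] = (Vemb f s + Vemb f t)%MS.
Proof.
move=> Gs Gt st; rewrite /Vsum (bigD1 s) /= ?Gs ?eqxx //; congr (_ + _)%MS.
apply: big_pred1 => u /=; case: (eqVneq u t) => [->|_].
  by rewrite Gt orbT eq_sym.
by rewrite orbF -andbA andbN andbF.
Qed.

Lemma Vemb_gal (kap s : gal_of {:L}) : Vemb kap s = Vemb id (s * kap)%g.
Proof. by apply: eq_bigr => i _; rewrite galM ?memvf. Qed.

Lemma Vsum_gal (kap : gal_of {:L}) P : kap \in G ->
  Vsum kap [pred s | P (s * kap)%g] = Vsum id P.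
Proof.
move=> Gkap; rewrite /Vsum [RHS](reindex_inj (mulIg kap)) /=.
by apply: eq_big => [s|s _]; rewrite ?groupMr ?Vemb_gal.
Qed.

Hypothesis rhoA : Emodule_action rho.
Local Notation r := (rho_in rho L).

Lemma sub_VembP (s : gal_of {:L}) k (W : 'M[L]_(k, m)) :
  reflect (forall e, W *m r e = s e *: W) (W <= Vemb id s)%MS.
Proof.
apply: (iffP idP) => [sW e | hW]; last first.
  by apply/sub_bigcapmxP => i _; apply/eigenspaceP; rewrite hW.
have hb i : W *m r (vbasis {:L})`_i = s (vbasis {:L})`_i *: W.
  have [lti | dim_le_i] := ltnP i (\dim {:L}).
    exact/eigenspaceP/(sub_bigcapmxP sW (Ordinal lti)).
  by rewrite nth_default ?size_tuple // (rho_in0 rhoA) mulmx0 rmorph0 scale0r.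
rewrite (coord_vbasis (memvf e)) (rho_in_sum rhoA) mulmx_sumr linear_sum scaler_suml /=.
apply: eq_bigr => i _; rewrite (rho_inZ rhoA) -scalemxAr hb linearZ /= scalerA.
by rewrite linearZ /= mulrC mulr_algl.
Qed.

Hypothesis galL : galois 1%VS {:L}.
Local Notation al := (separable_generator 1%VS {:L}).

Lemma Vemb_eigenspace (s : gal_of {:L}) :
  (Vemb id s :=: eigenspace (r al) (s al))%MS.
Proof.
apply/eqmxP; apply/andP; split.
  by apply/eigenspaceP; have /sub_VembP := submx_refl (Vemb id s); apply.
apply/sub_VembP => e; have /Fadjoin1_polyP[p ->] := mem_generator galL e.
by rewrite gal_horner; apply/(rho_in_horner rhoA)/eigenspaceP.
Qed.

Lemma mxdirect_Vemb : mxdirect (\sum_(s in G) Vemb id s).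
Proof.
have inj_al : {in [in G] &, injective (fun s : gal_of {:L} => s al)}.
  by move=> s t _ _ /(gal_generator_inj galL).
rewrite mxdirectE /= (eqmx_sums (fun s _ => Vemb_eigenspace s)).
have := mxdirect_sum_eigenspace (r al) inj_al; rewrite mxdirectE /= => /eqP ->.
by apply/eqP/eq_bigr => s _; rewrite (Vemb_eigenspace s).
Qed.

Lemma sum_Vemb_full : (1%:M <= \sum_(s in G) Vemb id s)%MS.
Proof.
have [rs [Grs uniq_rs minPolyE]] := elimT (galois_factors (sub1v _)) galL al (memvf al).
have coprime_rs : {in [in rs] &, forall s t : gal_of {:L},
    t != s -> coprimep ('X - (s al)%:P) ('X - (t al)%:P)}.
  move=> s t _ _ ts; rewrite coprimep_XsubC root_XsubC.
  by apply: contra ts => /eqP/(gal_generator_inj galL) ->.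
have ker1 : (kermxpoly (r al) (minPoly 1 al) :=: 1%:M)%MS.
  have [q qE] := polyOver1P (minPolyOver 1 al).
  by rewrite qE; apply: kermxpoly_rho_in_root; rewrite // -qE root_minPoly.
rewrite -ker1 minPolyE big_map big_uniq ?(map_uniq uniq_rs) //.
rewrite (kermxpoly_prod _ coprime_rs); apply/sumsmx_subP => s rs_s.
rewrite -eigenspace_poly -Vemb_eigenspace.
by apply: (sumsmx_sup s) => //; apply: (subsetP Grs).
Qed.

End EmbeddingEigenspaces.

Section ProjectionCondition.
Variables (L : splittingFieldType rat) (m : nat) (rho : L -> 'M[rat]_m).
Hypotheses (rhoA : Emodule_action rho) (galL : galois 1%VS {:L}).
Variables (k : nat) (W : 'M[rat]_(k, m)).
Local Notation G := 'Gal({:L} / 1%VS)%g.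
Local Notation Wover K := (map_mx (fun q : rat => ratr q) W : 'M[K]_(k, m)).

(* P_A(W) = V_A, in the form V_A <= W + V_(G \ A) computed over L. *)
Definition projects_onto (P : pred (gal_of {:L})) : bool :=
  (Vsum rho id P <= Wover L + Vsum rho id (predC P))%MS.

Lemma eq_projects_onto P Q : P =1 Q -> projects_onto P = projects_onto Q.
Proof.
move=> eqPQ; rewrite /projects_onto (eq_Vsum rho id eqPQ).
by rewrite (@eq_Vsum _ _ rho _ id (predC P) (predC Q)) // => s /=; rewrite eqPQ.
Qed.

Lemma Vsum_direct (K : fieldType) (f : {rmorphism L -> K}) P :
  (Vsum rho f P :&: Vsum rho f (predC P) = 0)%MS.
Proof.
have dxL : (Vsum rho id P :&: Vsum rho id (predC P) = 0)%MS.
  exact: mxdirect_sum_split (mxdirect_Vemb rhoA galL).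
apply/eqP; rewrite -submx0 -(cap_eqmx (Vsum_map rho f P) (Vsum_map rho f _)).
by rewrite -map_capmx dxL map_mx0.
Qed.

Lemma Vsum_full (K : fieldType) (f : {rmorphism L -> K}) P :
  (1%:M <= Vsum rho f P + Vsum rho f (predC P))%MS.
Proof.
have fullL : (1%:M <= Vsum rho id P + Vsum rho id (predC P))%MS.
  by rewrite /Vsum -bigID; apply: sum_Vemb_full.
by rewrite -(map_submx f) map_scalar_mx rmorph1 map_addsmx
  (adds_eqmx (Vsum_map rho f P) (Vsum_map rho f _)) in fullL.
Qed.

Lemma sub_Vsum_map (K : fieldType) (f : {rmorphism L -> K}) P :
  (Vsum rho f P <= Wover K + Vsum rho f (predC P))%MS = projects_onto P.
Proof.
have WoverE : map_mx f (Wover L) = Wover K.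
  by rewrite -map_mx_comp; apply: eq_map_mx => q /=; rewrite fmorph_rat.
by rewrite /projects_onto -(map_submx f) map_addsmx WoverE Vsum_map
  (adds_eqmx (eqmx_refl _) (Vsum_map rho f _)).
Qed.

Lemma projects_onto_proj (K : fieldType) (f : {rmorphism L -> K}) P Q U :
  (U :=: Vsum rho f P)%MS -> (forall s, Q s = ~~ P s) ->
  (Wover K *m proj_mx U (Vsum rho f Q) == U)%MS = projects_onto P.
Proof.
move=> eqU eqQ; rewrite (@eq_Vsum _ _ rho _ f Q (predC P)) //.
rewrite proj_mx_img_eqE; first by rewrite eqU sub_Vsum_map.
  by apply/eqP; rewrite -submx0 (cap_eqmx eqU (eqmx_refl _)) Vsum_direct.
by rewrite (adds_eqmx eqU (eqmx_refl _)) Vsum_full.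
Qed.

Lemma projects_onto_gal P kap : kap \in G ->
  projects_onto [pred s | P (s * kap)%g] = projects_onto P.
Proof.
move=> Gkap; rewrite -(sub_Vsum_map kap) (Vsum_gal _ _ Gkap).
by rewrite (Vsum_gal _ (predC P) Gkap).
Qed.

End ProjectionCondition.

Section ComplexProjections.
Variables (R : realType) (L : splittingFieldType rat) (iota : {rmorphism L -> R[i]}).
Variables (m : nat) (rho : L -> 'M[rat]_m) (k : nat) (W : 'M[rat]_(k, m)).
Hypotheses (rhoA : Emodule_action rho) (galL : galois 1%VS {:L}).
Local Notation G := 'Gal({:L} / 1%VS)%g.

Lemma Psig_projects_onto s : s \in G ->
  (toC R W *m Psig iota rho s == Vsig iota rho s)%MS = projects_onto rho W (pred1 s).
Proof.
move=> Gs; apply: (projects_onto_proj rhoA galL _ (P := pred1 s)) => //.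
by rewrite Vsum_pred1.
Qed.

Lemma Psig2_projects_onto s t : s \in G -> t \in G -> s != t ->
  (toC R W *m Psig2 iota rho s t == Vsig iota rho s + Vsig iota rho t)%MS =
  projects_onto rho W [pred u | (u == s) || (u == t)].
Proof.
move=> Gs Gt st; apply: (projects_onto_proj rhoA galL) => [|u /=].
  by rewrite Vsum_pred2.
by rewrite negb_or.
Qed.

End ComplexProjections.

Theorem lemma2p1 (R : realType) (L : splittingFieldType rat)
  (iota : {rmorphism L -> R[i]}) (m : nat) (rho : L -> 'M[rat]_m)
  (k : nat) (WQ : 'M[rat]_(k, m)) :
  galois 1%VS {:L} ->
  Emodule_action rho ->
  (* (i) *)
  ((exists2 s0, s0 \in 'Gal({:L} / 1%VS)%g &
      (toC R WQ *m Psig iota rho s0 == Vsig iota rho s0)%MS) ->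
    forall s, s \in 'Gal({:L} / 1%VS)%g ->
      (toC R WQ *m Psig iota rho s == Vsig iota rho s)%MS)
  /\
  (* (ii) *)
  (forall s0 t0, s0 \in 'Gal({:L} / 1%VS)%g -> t0 \in 'Gal({:L} / 1%VS)%g ->
    s0 != t0 ->
    (toC R WQ *m Psig2 iota rho s0 t0 == Vsig iota rho s0 + Vsig iota rho t0)%MS ->
    forall kap, kap \in 'Gal({:L} / 1%VS)%g ->
      (toC R WQ *m Psig2 iota rho (galcomp kap s0) (galcomp kap t0)
        == Vsig iota rho (galcomp kap s0) + Vsig iota rho (galcomp kap t0))%MS).
Proof.
move=> galL rhoA; split.
  case=> s0 Gs0; rewrite Psig_projects_onto // => proj_s0 s Gs.
  have Gkap : (s0^-1 * s)%g \in 'Gal({:L} / 1%VS)%g by rewrite groupM ?groupV.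
  rewrite Psig_projects_onto // -[s](mulKVg s0) -(projects_onto_gal _ _ _ Gkap).
  rewrite (eq_projects_onto _ _ (Q := pred1 s0)) //.
  by move=> u; rewrite /= (inj_eq (mulIg _)).
move=> s0 t0 Gs0 Gt0 s0t0; rewrite Psig2_projects_onto // => proj_s0t0 kap Gkap.
rewrite Psig2_projects_onto ?groupM ?(inj_eq (mulIg kap)) //.
rewrite -(projects_onto_gal _ _ _ Gkap).
rewrite (eq_projects_onto _ _ (Q := [pred u | (u == s0) || (u == t0)])) //.
by move=> u; rewrite /= !(inj_eq (mulIg kap)).
Qed.
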